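(* Let $E$ and $F$ be Banach spaces and let $T:E\to F$ be a coarse $(M,L)$-quasi isometry, with $\xi>0$ such that $T(E)$ is $\xi$-dense in $F$. Then there exists a bijective coarse $\big(M,(4M^2+3)L+4\xi\big)$-quasi isometry $\widetilde{T}:E\to F$ such that $\|\widetilde{T}x-Tx\|\le(2M^2+2)L+2\xi$ for all $x\in E$.
   Context: A set $S$ is $\xi$-dense in $F$ if every point of $F$ is at distance at most $\xi$ from some point of $S$. A map $T:E\to F$ between metric spaces is a coarse $(M,L)$-quasi isometry (with $M>0$, $L\ge0$) if $\frac{1}{M}d_E(x,y)-L\le d_F(Tx,Ty)\le M d_E(x,y)+L$ for all $x,y\in E$ and $T(E)$ is $\xi'$-dense in $F$ for some $\xi'>0$. *)

From HB Require Import structures.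
From mathcomp Require Import all_boot all_order all_algebra.
From mathcomp Require Import all_classical all_reals all_analysis.
Set Implicit Arguments. Unset Strict Implicit. Unset Printing Implicit Defensive.
Import Order.TTheory GRing.Theory Num.Theory.
Import numFieldNormedType.Exports.
Local Open Scope classical_set_scope.
Local Open Scope ring_scope.

Definition xi_dense (R : realType) (F : normedModType R) (S : set F) (xi : R) : Prop :=
  forall y : F, exists2 s : F, S s & `|y - s| <= xi.

Definition coarse_QI (R : realType) (E F : normedModType R) (T : E -> F) (M L : R) : Prop :=
  [/\ 0 < M, 0 <= L,
      (forall x y : E, M^-1 * `|x - y| - L <= `|T x - T y| /\
                       `|T x - T y| <= M * `|x - y| + L)
    & exists2 xi' : R, 0 < xi' & xi_dense (range T) xi'].

From HB Require Import structures.
From mathcomp Require Import all_boot all_order all_algebra.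
From mathcomp Require Import all_classical all_reals all_analysis.
From mathcomp Require Import ring lra.
Import Order.TTheory GRing.Theory Num.Theory.
Import numFieldNormedType.Exports.
Local Open Scope classical_set_scope.
Local Open Scope ring_scope.

(* Let A be a maximal set of points of E whose T-images are (L + xi/2)-separated:
   A is a net in E, T(A) is a net in F and T is injective on A.  In a Banach space,
   a separated set Q carries an injective coding of Q-valued sequences: sum the
   points q_n / (1 + |q_n|) with weights decaying so fast that the first index at
   which two sequences differ dominates everything after it.  Coding a point y by
   the net points near (k+1) y, k : nat, and shrinking, E injects into any ball of F
   and F into any ball of E.  Adding these small injections to "round to the net,
   then apply T" (resp. "round to T(A), then pull back") gives injections
   f : E -> F close to T and g : F -> E with T o g close to the identity, and the
   Schroeder-Bernstein construction merges them into a bijection whose value at x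
   is either f x or a g-preimage of x, hence close to T x. *)

Section Shrink.
Context {R : realType} {V : normedModType R}.
Implicit Types p q : V.

Definition shrink p : V := (1 + `|p|)^-1 *: p.

Let one_plus_norm_gt0 p : 0 < 1 + `|p|. Proof. by rewrite ltr_pwDl. Qed.

Lemma norm_shrink p : `|shrink p| = 1 - (1 + `|p|)^-1.
Proof.
rewrite /shrink normrZ gtr0_norm ?invr_gt0 //.
by field; exact: lt0r_neq0.
Qed.

Lemma norm_shrink_le1 p : `|shrink p| <= 1.
Proof. by rewrite norm_shrink lerBlDr lerDl invr_ge0 ltW. Qed.

Lemma dist_le_shrink p q :
  `|p - q| <= `|shrink p - shrink q| * ((1 + `|p|) * (1 + `|q|)).
Proof.
set a := 1 + `|p|; set b := 1 + `|q|.
have a0 : 0 < a := one_plus_norm_gt0 p; have b0 : 0 < b := one_plus_norm_gt0 q.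
have key : (a * b) *: (shrink p - shrink q) = b *: (p - q) + (`|q| - `|p|) *: q.
  rewrite scalerBr !scalerA mulrAC mulfV ?gt_eqF // -mulrA mulfV ?gt_eqF //.
  rewrite mul1r mulr1 scalerBr scalerBl /a /b !scalerDl !scale1r addrC.
  by rewrite [LHS]addrC !opprD !addrA subrK.
have -> : `|shrink p - shrink q| * (a * b) = `|b *: (p - q) + (`|q| - `|p|) *: q|.
  by rewrite -key normrZ mulrC gtr0_norm // mulr_gt0.
apply: le_trans (lerB_normD _ _); rewrite !normrZ (gtr0_norm b0).
have : `| `|q| - `|p| | * `|q| <= `|p - q| * `|q|.
  by rewrite ler_wpM2r // distrC ler_dist_dist.
rewrite /b; nra.
Qed.

Lemma shrink_inj : injective shrink.
Proof.
move=> p q e; have := dist_le_shrink p q; rewrite e subrr normr0 mul0r.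
by rewrite normr_le0 subr_eq0 => /eqP.
Qed.

Lemma exists_self_injection_into_ball {r : R} : 0 < r ->
  exists f : V -> V, injective f /\ forall p, `|f p| <= r.
Proof.
move=> r0; exists (fun p => r *: shrink p); split.
  by move=> p q /(scalerI (lt0r_neq0 r0)) /shrink_inj.
move=> p; rewrite normrZ gtr0_norm //.
by apply: ler_piMr; [exact: ltW | exact: norm_shrink_le1].
Qed.

End Shrink.

Section TelescopingSeries.
Context {R : realType} {V : completeNormedModType R} {t : nat -> V} {w : nat -> R}.
Hypotheses (w_ge0 : forall n, 0 <= w n) (t_le : forall n, `|t n| <= w n - w n.+1).

Let sum_norm_le {m n} : (m <= n)%N -> \sum_(m <= k < n) `|t k| <= w m - w n.
Proof.
move=> mn; have -> : w m - w n = \sum_(m <= k < n) (w k - w k.+1).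
  by rewrite -opprB -telescope_sumr // -sumrN; apply: eq_bigr => k _; rewrite opprB.
exact: ler_sum.
Qed.

Lemma telescoping_series_cvg : cvgn (series t).
Proof.
apply: normed_cvg; apply: nondecreasing_is_cvgn.
  by apply: nondecreasing_series => k _ _; exact: normr_ge0.
exists (w 0%N) => _ [n _ <-]; change (\sum_(0 <= k < n) `|t k| <= w 0%N).
by apply: le_trans (sum_norm_le (leq0n n)) _; rewrite lerBlDr lerDl.
Qed.

Lemma telescoping_series_tail m : `|limn (series t) - series t m| <= w m.
Proof.
have lim_dist : `|series t n - series t m| @[n --> \oo] --> `|limn (series t) - series t m|.
  by apply: cvg_norm; apply: cvgB; [exact: telescoping_series_cvg | exact: cvg_cst].
apply: (cvgr_to_le lim_dist).
near=> n; have mn : (m <= n)%N by near: n; exact: nbhs_infty_ge.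
rewrite sub_series_geq //; apply: le_trans (ler_norm_sum _ _ _) _.
by apply: le_trans (sum_norm_le mn) _; rewrite lerBlDr lerDl.
Unshelve. all: by end_near.
Qed.

End TelescopingSeries.

Definition separated_on {R : realType} {X : Type} {Y : normedModType R}
    (j : X -> Y) (P : set X) (s : R) : Prop :=
  forall p q, P p -> P q -> p <> q -> s <= `|j p - j q|.

Lemma separated_on_image {R : realType} {X : Type} {Y : normedModType R}
    {j : X -> Y} {P : set X} {s : R} :
  separated_on j P s -> separated_on id (j @` P) s.
Proof.
by move=> j_sep _ _ [p Pp <-] [q Pq <-] pq; apply: j_sep => // epq; apply: pq; rewrite epq.
Qed.

(* [c y k] is a point of [P] near [k.+1 *: y]; equal codes force
   [(k+1) |y - z| <= 2 rho] for all [k]. *)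
Lemma exists_dense_coding {R : realType} {Y : normedModType R} {P : set Y} {rho : R} :
  xi_dense P rho -> exists c : Y -> nat -> Y, (forall y k, P (c y k)) /\ injective c.
Proof.
move=> P_dense.
have /choice[near_pt near_ptP] : forall y : Y, exists p, P p /\ `|y - p| <= rho.
  by move=> y; have [p Pp yp] := P_dense y; exists p.
exists (fun y k => near_pt (k.+1%:R *: y)); split => [y k|y z e].
  by case: (near_ptP (k.+1%:R *: y)).
have dist_le k : k.+1%:R * `|y - z| <= 2 * rho.
  have [_ hy] := near_ptP (k.+1%:R *: y); have [_ hz] := near_ptP (k.+1%:R *: z).
  rewrite (congr1 (fun c => c k) e) in hy.
  have := ler_distD (near_pt (k.+1%:R *: z)) (k.+1%:R *: y) (k.+1%:R *: z).
  by rewrite -scalerBr normrZ ger0_norm // (distrC (near_pt _)); lra.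
apply/eqP; rewrite -subr_eq0 -normr_le0 leNgt; apply/negP => yz_gt0.
have := dist_le (Num.truncn (2 * rho / `|y - z|)).
by rewrite -ler_pdivlMr // leNgt truncnS_gt.
Qed.

Lemma first_difference (T : eqType) (a b : nat -> T) :
  a <> b -> exists2 k, a k <> b k & forall m, (m < k)%N -> a m = b m.
Proof.
move=> ab; have ex : exists k, a k != b k.
  apply: contrapT => /forallNP nex; apply: ab; apply: funext => k.
  by apply/eqP/negPn/negP; apply: nex.
case: (ex_minnP ex) => k /eqP akbk kmin; exists k => // m mk.
by apply/eqP; apply: contraTT mk => /kmin; rewrite leqNgt.
Qed.

(* [a, b] are the factors (1 + |p|)^-1, (1 + |q|)^-1 and [D] is |shrink p - shrink q|. *)
Lemma shrink_gap_arith (R : realFieldType) (s a b D : R) :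
  0 < s <= 1 -> 0 < a <= 1 -> 0 < b <= 1 ->
  s * a * b <= D -> a - b <= D -> b - a <= D ->
  2 * (s * a ^+ 2 / 16) + 2 * (s * b ^+ 2 / 16) < D.
Proof.
move=> /andP[s0 s1] /andP[a0 a1] /andP[b0 b1].
wlog ba : a b a0 a1 b0 b1 / b <= a.
  move=> W h1 h2 h3; have [ba|/ltW ab] := leP b a; first exact: W.
  by rewrite addrC; apply: W => //; rewrite mulrAC.
move=> h1 h2 _.
have sa2_le : s * b ^+ 2 <= s * a ^+ 2 by rewrite ler_pM2l // lerXn2r // ?nnegrE ltW.
have [hb|hb] := leP (a / 2) b.
  apply: lt_le_trans h1.
  have : s * a * (a / 2) <= s * a * b by rewrite ler_pM2l ?mulr_gt0.
  have : 0 < s * a ^+ 2 by rewrite mulr_gt0 // exprn_gt0.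
  move: sa2_le; rewrite !expr2; nra.
apply: lt_le_trans h2.
have : s * a ^+ 2 <= a by rewrite expr2; nra.
move: sa2_le; rewrite !expr2; nra.
Qed.

Section SeriesCoding.
Context {R : realType} {X : completeNormedModType R} {Q : set X} {s : R}.
Hypotheses (s_gt0 : 0 < s) (Q_sep : separated_on id Q s).

Let s1 := Num.min s 1.
Let pi (p : X) := (1 + `|p|)^-1.
Let d (p : X) := s1 * pi p ^+ 2 / 16.
Let weight (a : nat -> X) n := \prod_(m < n) d (a m).
Let term (a : nat -> X) n := weight a n *: shrink (a n).

Let s1_gt0 : 0 < s1. Proof. by rewrite lt_min s_gt0 ltr01. Qed.
Let pi_gt0 p : 0 < pi p. Proof. by rewrite invr_gt0 ltr_pwDl. Qed.
Let pi_le1 p : pi p <= 1. Proof. by rewrite invf_le1 ?ltr_pwDl // lerDl. Qed.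
Let d_gt0 p : 0 < d p. Proof. by rewrite !mulr_gt0 ?exprn_gt0. Qed.

Let d_le_half p : d p <= 2^-1.
Proof.
have s1_le1 : s1 <= 1 by rewrite ge_min lexx orbT.
have : pi p ^+ 2 <= 1 by rewrite expr_le1 // ltW.
have : 0 <= pi p ^+ 2 by rewrite exprn_ge0 // ltW.
rewrite /d; move: (pi p ^+ 2) => x; nra.
Qed.

Let d_gap {p q} : Q p -> Q q -> p <> q -> 2 * d p + 2 * d q < `|shrink p - shrink q|.
Proof.
move=> Qp Qq pq; apply: shrink_gap_arith.
- by rewrite s1_gt0 ge_min lexx orbT.
- by rewrite pi_gt0 pi_le1.
- by rewrite pi_gt0 pi_le1.
- have sep : s1 <= `|p - q| by apply: le_trans _ (Q_sep _ _ Qp Qq pq); rewrite ge_min lexx.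
  have : `|p - q| * (pi p * pi q) <= `|shrink p - shrink q|.
    rewrite /pi -invfM ler_pdivrMr ?mulr_gt0 ?ltr_pwDl //; exact: dist_le_shrink.
  by apply: le_trans; rewrite -mulrA ler_pM2r ?mulr_gt0.
- by have := lerB_dist (shrink q) (shrink p); rewrite !norm_shrink distrC /pi; lra.
- by have := lerB_dist (shrink p) (shrink q); rewrite !norm_shrink /pi; lra.
Qed.

Let weightS a n : weight a n.+1 = weight a n * d (a n).
Proof. exact: big_ord_recr. Qed.

Let weight_gt0 a n : 0 < weight a n.
Proof. by apply: prodr_gt0 => m _. Qed.

Let norm_term_le a n : `|term a n| <= 2 * weight a n - 2 * weight a n.+1.
Proof.
rewrite normrZ gtr0_norm // weightS.
have := norm_shrink_le1 (a n); have := d_le_half (a n); have := weight_gt0 a n.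
move: (weight a n) (d (a n)) => w x; nra.
Qed.

Let weight_agree {a b k} :
  (forall m, (m < k)%N -> a m = b m) -> forall n, (n <= k)%N -> weight a n = weight b n.
Proof.
by move=> ab n nk; apply: eq_bigr => m _; rewrite ab // (leq_trans (ltn_ord m)).
Qed.

Let series_agree {a b k} :
  (forall m, (m < k)%N -> a m = b m) -> series (term a) k = series (term b) k.
Proof.
move=> ab; rewrite !seriesEord /=; apply: eq_bigr => m _.
by rewrite /term (weight_agree ab) ?ab // ltnW.
Qed.

Lemma exists_series_coding : exists Phi : (nat -> X) -> X,
  forall a b, (forall k, Q (a k)) -> (forall k, Q (b k)) -> Phi a = Phi b -> a = b.
Proof.
exists (fun a => limn (series (term a))) => a b Qa Qb eq_lim.
apply: contrapT => /first_difference[k akbk agree].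
have tail c : `|limn (series (term c)) - series (term c) k.+1| <= 2 * weight c k.+1.
  apply: (telescoping_series_tail (w := fun n => 2 * weight c n)) => [n|n].
    by rewrite mulr_ge0 // ltW.
  exact: norm_term_le.
have wk : weight a k = weight b k by apply: (weight_agree agree).
have head : series (term a) k.+1 - series (term b) k.+1
    = weight a k *: (shrink (a k) - shrink (b k)).
  by rewrite !seriesSr (series_agree agree) [_ + term a k]addrC addrKA /term wk scalerBr.
have : weight a k * `|shrink (a k) - shrink (b k)|
    <= 2 * weight a k.+1 + 2 * weight b k.+1.
  rewrite -[X in X * _]gtr0_norm // -normrZ -head.
  have -> : series (term a) k.+1 - series (term b) k.+1 =
      (limn (series (term b)) - series (term b) k.+1)
      - (limn (series (term a)) - series (term a) k.+1).
    by rewrite eq_lim opprB [RHS]addrC addrA subrK.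
  by apply: le_trans (ler_normB _ _) _; rewrite addrC lerD.
rewrite !weightS -wk.
have := d_gap (Qa k) (Qb k) akbk; rewrite -(ltr_pM2l (weight_gt0 a k)); nra.
Qed.

End SeriesCoding.

Lemma exists_injection_into_ball {R : realType} {X : normedModType R}
    {Y : completeNormedModType R} {P : set X} {j : X -> Y} {rho s r : R} :
  0 < s -> 0 < r -> xi_dense P rho -> separated_on j P s ->
  exists phi : X -> Y, injective phi /\ forall x, `|phi x| <= r.
Proof.
move=> s_gt0 r_gt0 P_dense j_sep.
have [c [cP c_inj]] := exists_dense_coding P_dense.
have [Phi Phi_inj] := exists_series_coding s_gt0 (separated_on_image j_sep).
have [sq [sq_inj sq_le]] := exists_self_injection_into_ball (V := Y) r_gt0.
exists (fun x => sq (Phi (fun k => j (c x k)))); split => // x x' /sq_inj e.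
have jcP z k : (j @` P) (j (c z k)) by exists (c z k).
have jc_eq := Phi_inj _ _ (jcP x) (jcP x') e.
apply: c_inj; apply: funext => k; apply: contrapT => ne.
have := j_sep _ _ (cP x k) (cP x' k) ne.
by rewrite (congr1 (fun f => f k) jc_eq) subrr normr0; lra.
Qed.

Lemma injective_add_small {R : realType} {X : Type} {Y : normedModType R}
    {Q : set Y} {c phi : X -> Y} {s r : R} :
  separated_on id Q s -> (forall x, Q (c x)) ->
  injective phi -> (forall x, `|phi x| <= r) -> 2 * r < s ->
  injective (fun x => c x + phi x).
Proof.
move=> Q_sep cQ phi_inj phi_le rs x x' e.
have [cxx'|ne] := pselect (c x = c x').
  by apply: phi_inj; apply: (addrI (c x)); rewrite e cxx'.
exfalso; have := Q_sep _ _ (cQ x) (cQ x') ne.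
have -> : c x - c x' = phi x' - phi x.
  by rewrite (canRL (addrK _) e) -addrA [LHS]addrC addrA subrK addrC.
have := ler_normB (phi x') (phi x); have := phi_le x; have := phi_le x'; lra.
Qed.

Lemma exists_separated_net {R : realType} {E F : normedModType R} (T : E -> F) {s : R} :
  0 < s -> exists A : set E,
    separated_on T A s /\ forall x, exists2 a, A a & `|T x - T a| < s.
Proof.
move=> s_gt0.
have [|A [A_sep A_max]] := @Zorn_bigcup E (fun A => separated_on T A s).
  move=> G G_sep G_tot a b [X GX Xa] [Y GY Yb] ab.
  have [XY|YX] := G_tot _ _ GX GY.
    exact: (G_sep _ GY) (XY _ Xa) Yb ab.
  exact: (G_sep _ GX) Xa (YX _ Yb) ab.
exists A; split => // x; apply: contrapT => x_far.
have {}x_far a : A a -> s <= `|T x - T a|.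
  by move=> Aa; rewrite leNgt; apply/negP => xa; apply: x_far; exists a.
have xA : ~ A x by move=> /x_far; rewrite subrr normr0; lra.
apply: (A_max (A `|` [set x])).
  by split => [y Ay|AxA]; [left | apply: xA; apply: AxA; right].
move=> a b [Aa|->] [Ab|->] ab.
- exact: A_sep.
- by rewrite distrC; apply: x_far.
- exact: x_far.
- by case: ab.
Qed.

Section SchroederBernstein.
Context {X Y : Type} (f : X -> Y) {g : Y -> X} {ginv : X -> Y}.
Hypotheses (f_inj : injective f) (g_inj : injective g)
  (ginvK : forall x, (exists y, g y = x) -> g (ginv x) = x).

Definition sb_chain (x : X) : Prop :=
  exists n x0, ~ (exists y, g y = x0) /\ x = iter n (g \o f) x0.

Definition sb_map (x : X) : Y := if pselect (sb_chain x) then f x else ginv x.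

Lemma ginvK_outside_chain {x} : ~ sb_chain x -> g (ginv x) = x.
Proof. by move=> xC; apply: ginvK; apply: contrapT => xg; apply: xC; exists 0%N, x. Qed.

Lemma sb_map_cases x : sb_map x = f x \/ g (sb_map x) = x.
Proof.
by rewrite /sb_map; case: pselect => xC; [left | right; exact: ginvK_outside_chain].
Qed.

Lemma sb_map_inj : injective sb_map.
Proof.
have mixed x x' : sb_chain x -> ~ sb_chain x' -> f x <> ginv x'.
  move=> [n [x0 [x0g ->]]] x'C fx; apply: (x'C); exists n.+1, x0; split => //.
  by rewrite iterS /= fx ginvK_outside_chain.
move=> x x'; rewrite /sb_map; case: pselect => xC; case: pselect => x'C /=.
- exact: f_inj.
- by move/(mixed _ _ xC x'C).
- by move/esym/(mixed _ _ x'C xC).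
- by move=> e; rewrite -(ginvK_outside_chain xC) -(ginvK_outside_chain x'C) e.
Qed.

Lemma sb_map_surj y : exists x, sb_map x = y.
Proof.
have [[n [x0 [x0g gy]]]|gyC] := pselect (sb_chain (g y)); last first.
  exists (g y); rewrite /sb_map; case: pselect => //= _.
  by apply: g_inj; rewrite ginvK //; exists y.
case: n gy => [gy|n gy]; first by case: x0g; exists y.
exists (iter n (g \o f) x0); rewrite /sb_map.
case: pselect => [_|nC] /=; last by case: nC; exists n, x0.
by apply: g_inj; rewrite gy.
Qed.

End SchroederBernstein.

Lemma exists_bijection_between_injections {X Y : Type} {f : X -> Y} {g : Y -> X} :
  injective f -> injective g ->
  exists h : X -> Y, bijective h /\ forall x, h x = f x \/ g (h x) = x.
Proof.
move=> f_inj g_inj.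
have /choice[ginv ginvK] : forall x, exists y, (exists y', g y' = x) -> g y = x.
  move=> x; have [[y gy]|xg] := pselect (exists y, g y = x); first by exists y.
  by exists (f x) => /xg.
have [hinv hinvK] := choice (sb_map_surj f g_inj ginvK).
exists (@sb_map _ _ f g ginv); split; last exact: sb_map_cases.
exists hinv => [x|]; last exact: hinvK.
by apply: (sb_map_inj f f_inj ginvK); rewrite hinvK.
Qed.

Lemma net_image_dense {R : realType} {E F : normedModType R} {T : E -> F}
    {A : set E} {s xi : R} :
  xi_dense (range T) xi -> (forall x, exists2 a, A a & `|T x - T a| < s) ->
  xi_dense (T @` A) (xi + s).
Proof.
move=> T_dense A_cover y; have [_ [x _ <-] yx] := T_dense y.
have [a Aa xa] := A_cover x; exists (T a); first by exists a.
by have := ler_distD (T x) y (T a); lra.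
Qed.

Definition qi_bounds {R : realType} {E F : normedModType R} (T : E -> F) (M L : R) :=
  forall x y : E, M^-1 * `|x - y| - L <= `|T x - T y| /\ `|T x - T y| <= M * `|x - y| + L.

Section QuasiIsometryBounds.
Context {R : realType} {E F : normedModType R} {T : E -> F} {M L : R}.
Hypothesis T_qi : qi_bounds T M L.

Lemma qi_bounds_widen {K} : L <= K -> qi_bounds T M K.
Proof. by move=> LK x y; have [lo hi] := T_qi x y; split; lra. Qed.

Lemma qi_bounds_near {h : E -> F} {D : R} :
  (forall x, `|h x - T x| <= D) -> qi_bounds h M (L + 2 * D).
Proof.
move=> hT x y; have [lo hi] := T_qi x y; have := hT x; have := hT y.
have := ler_distD (T x) (h x) (h y); have := ler_distD (T y) (T x) (h y).
have := ler_distD (h x) (T x) (T y); have := ler_distD (h y) (h x) (T y).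
rewrite (distrC (T y) (h y)) (distrC (T x) (h x)); split; lra.
Qed.

Hypothesis M_gt0 : 0 < M.

Lemma qi_bounds_ge1_or_trivial : 1 <= M \/ forall x y : E, x = y.
Proof.
have [|M_lt1] := leP 1 M; [by left | right => x y; apply: contrapT => xy].
have w_gt0 : 0 < `|x - y| by rewrite normr_gt0 subr_eq0; apply/eqP.
have gap_gt0 : 0 < M^-1 - M by rewrite subr_gt0 (lt_trans M_lt1) // invf_gt1.
set t := (2 * `|L| + 1) / ((M^-1 - M) * `|x - y|).
have t_ge0 : 0 <= t by rewrite divr_ge0 ?mulr_ge0 ?ltW //; lra.
have tw : (M^-1 - M) * (t * `|x - y|) = 2 * `|L| + 1.
  by rewrite /t mulrCA -mulrA mulVf ?mulr1 // mulf_neq0 ?gt_eqF.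
have [lo hi] := T_qi (t *: (x - y)) 0.
rewrite subr0 normrZ (ger0_norm t_ge0) in lo hi.
by have := ler_norm L; move: lo hi tw; set N := `|T _ - T 0|; nra.
Qed.

Lemma qi_net_dense {A : set E} {s : R} :
  (forall x, exists2 a, A a & `|T x - T a| < s) -> xi_dense A (M * (s + L)).
Proof.
move=> A_cover x; have [a Aa xa] := A_cover x; exists a => //.
have [lo _] := T_qi x a.
by rewrite -ler_pdivrMl // mulrC; lra.
Qed.

Lemma qi_net_separated {A : set E} {s : R} :
  separated_on T A s -> separated_on id A ((s - L) / M).
Proof.
move=> A_sep a b Aa Ab ab; have := A_sep _ _ Aa Ab ab; have [_ hi] := T_qi a b.
by rewrite ler_pdivrMr // mulrC; lra.
Qed.

End QuasiIsometryBounds.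

Lemma exists_injection_near_qi {R : realType} {E : normedModType R}
    {F : completeNormedModType R} {T : E -> F} {M L xi : R} :
  0 < M -> 0 <= L -> qi_bounds T M L -> 0 < xi ->
  exists f : E -> F, injective f /\ forall x, `|f x - T x| <= L + xi.
Proof.
move=> M_gt0 L_ge0 T_qi xi_gt0.
set s := L + xi / 2; have s_gt0 : 0 < s by rewrite /s; lra.
have [A [A_sep A_cover]] := exists_separated_net T s_gt0.
have [phi [phi_inj phi_le]] := exists_injection_into_ball (r := xi / 8) s_gt0
  (divr_gt0 xi_gt0 (ltr0n _ 8)) (qi_net_dense T_qi M_gt0 A_cover) A_sep.
have /choice[b bP] : forall x, exists a, A a /\ `|T x - T a| < s.
  by move=> x; have [a Aa xa] := A_cover x; exists a.
exists (fun x => T (b x) + phi x); split.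
  apply: injective_add_small (separated_on_image A_sep) _ phi_inj phi_le _.
    by move=> x; exists (b x) => //; case: (bP x).
  by rewrite /s; lra.
move=> x; rewrite addrAC; apply: le_trans (ler_normD _ _) _.
by have [_] := bP x; have := phi_le x; rewrite distrC /s; lra.
Qed.

Lemma exists_injection_near_inverse_qi {R : realType} {E : completeNormedModType R}
    {F : normedModType R} {T : E -> F} {M L xi : R} :
  0 < M -> 0 <= L -> qi_bounds T M L -> 0 < xi -> xi_dense (range T) xi ->
  exists g : F -> E, injective g /\ forall y, `|T (g y) - y| <= 2 * L + 2 * xi.
Proof.
move=> M_gt0 L_ge0 T_qi xi_gt0 T_dense.
set s := L + xi / 2; have s_gt0 : 0 < s by rewrite /s; lra.
have [A [A_sep A_cover]] := exists_separated_net T s_gt0.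
set c := xi / 2 / M; have c_gt0 : 0 < c by rewrite !divr_gt0.
have A_sepE : separated_on id A c.
  by have := qi_net_separated T_qi M_gt0 A_sep; rewrite /s addrC addKr.
have TA_dense := net_image_dense T_dense A_cover.
have TA_sep : separated_on (pinv A T) (T @` A) c.
  have T_inj : {in A &, injective T}.
    move=> a b /set_mem Aa /set_mem Ab Tab; apply: contrapT => ab.
    by have := A_sep _ _ Aa Ab ab; rewrite Tab subrr normr0; lra.
  move=> _ _ [a Aa <-] [b Ab <-] Tab.
  rewrite !(pinvKV _ T_inj) ?mem_set //; apply: A_sepE => // ab.
  by apply: Tab; rewrite ab.
have [psi [psi_inj psi_le]] :=
  exists_injection_into_ball (r := c / 4) c_gt0 (divr_gt0 c_gt0 (ltr0n _ 4)) TA_dense TA_sep.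
have /choice[b bP] : forall y, exists a, A a /\ `|y - T a| <= xi + s.
  by move=> y; have [_ [a Aa <-] ya] := TA_dense y; exists a.
exists (fun y => b y + psi y); split.
  by apply: injective_add_small A_sepE _ psi_inj psi_le _ => [y|]; [case: (bP y) | lra].
move=> y; have [_ yb] := bP y; have [_ hi] := T_qi (b y + psi y) (b y).
rewrite addrAC subrr add0r in hi.
have Mpsi : M * `|psi y| <= xi / 8.
  have -> : xi / 8 = M * (c / 4) by rewrite /c; field; rewrite gt_eqF.
  by rewrite ler_wpM2l // ltW.
have := ler_distD (T (b y)) (T (b y + psi y)) y.
by rewrite (distrC (T (b y)) y); move: yb; rewrite /s; lra.
Qed.

Theorem fact3 (R : realType) (E F : completeNormedModType R) (T : E -> F) (M L xi : R) :
  coarse_QI T M L -> 0 < xi -> xi_dense (range T) xi ->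
  exists Tt : E -> F,
    [/\ bijective Tt,
        coarse_QI Tt M ((4 * M ^+ 2 + 3) * L + 4 * xi)
      & forall x : E, `|Tt x - T x| <= (2 * M ^+ 2 + 2) * L + 2 * xi].
Proof.
move=> [M_gt0 L_ge0 T_qi _] xi_gt0 T_dense.
have [f [f_inj f_near]] := exists_injection_near_qi M_gt0 L_ge0 T_qi xi_gt0.
have [g [g_inj g_near]] :=
  exists_injection_near_inverse_qi M_gt0 L_ge0 T_qi xi_gt0 T_dense.
have [h [h_bij h_cases]] := exists_bijection_between_injections f_inj g_inj.
have h_near x : `|h x - T x| <= 2 * L + 2 * xi.
  case: (h_cases x) => [->|hx]; first by apply: le_trans (f_near x) _; lra.
  by rewrite -{2}hx distrC; exact: g_near.
have M2_ge0 : 0 <= M ^+ 2 := sqr_ge0 M.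
exists h; split => //; last by move=> x; apply: le_trans (h_near x) _; nra.
split => //; first by nra.
  have [M_ge1|E_triv] := qi_bounds_ge1_or_trivial T_qi M_gt0.
    have M2_ge1 : 1 <= M ^+ 2 by rewrite expr_ge1 // ltW.
    have K_ge : L + 2 * (2 * L + 2 * xi) <= (4 * M ^+ 2 + 3) * L + 4 * xi by nra.
    by move=> x y; exact: (qi_bounds_widen (qi_bounds_near T_qi h_near) K_ge x y).
  by move=> x y; rewrite (E_triv x y) !subrr !normr0 mulr0; split; nra.
exists 1 => // y; exists y; last by rewrite subrr normr0.
by case: h_bij => hinv _ hinvK; exists (hinv y).
Qed.
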